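(* Let $n\ge 1$ and let $H$ be a subgroup of the cyclic group $\mathbb{Z}_n=\{0,1,\dots,n-1\}$. Let $a$ be the smallest positive integer whose residue modulo $n$ lies in $H$ (so $a\mid n$, $H=\langle a\rangle$, and $a=n$ if $H=\{0\}$), and let $o(a)=n/a$ be the order of $a$ in $\mathbb{Z}_n$. Then $\Gamma_{\mathbb{Z}_n,H}$ admits a perfect code if and only if one of the following holds: (1) $n$ is odd; (2) $n$ is even and $o(a)$ is odd; (3) $n$ is even and $o(a)=2$; (4) $n$ is even, $o(a)\ge 4$ is even, and $a$ is odd.
   Context: For a subgroup $H$ of a finite abelian group $A$ (written additively with identity $0$), the subgroup sum graph $\Gamma_{A,H}$ is the simple undirected graph with vertex set $A$ in which distinct vertices $x,y$ are adjacent if and only if $x+y\in H\setminus\{0\}$. A perfect code in a graph is a set $C$ of vertices that is independent and such that every vertex not in $C$ is adjacent to exactly one vertex of $C$. *)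

From HB Require Import structures.
From mathcomp Require Import all_boot all_order all_algebra.
Set Implicit Arguments. Unset Strict Implicit. Unset Printing Implicit Defensive.
Import GRing.Theory.
Local Open Scope ring_scope.

Definition is_subgroup (A : finZmodType) (H : {set A}) : Prop :=
  0 \in H /\ (forall x y, x \in H -> y \in H -> x - y \in H).

Definition ssg_adj (A : finZmodType) (H : {set A}) : rel A :=
  fun x y => [&& x != y, x + y \in H & x + y != 0].

Definition perfect_code (T : finType) (e : rel T) (C : {set T}) : Prop :=
  (forall x y, x \in C -> y \in C -> ~~ e x y) /\
  (forall x, x \notin C -> #|[set c in C | e x c]| = 1%N).

Definition has_perfect_code (T : finType) (e : rel T) : Prop :=
  exists C : {set T}, perfect_code e C.

From HB Require Import structures.
From mathcomp Require Import all_boot all_order all_algebra zify.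
Set Implicit Arguments. Unset Strict Implicit. Unset Printing Implicit Defensive.
Import GRing.Theory.
Local Open Scope ring_scope.

(* In the subgroup sum graph, y is adjacent to x iff y lies in the coset -x + H
   and y is neither x nor -x.  The graph therefore splits along the pairs
   {X, -X} of cosets of H.  A pair with X <> -X induces a complete bipartite
   graph minus a perfect matching, with perfect code {c, -c}; a self-inverse
   coset X = -X induces a complete graph minus the matching x -- -x, which has
   a perfect code iff it contains an element with 2x = 0 or has at most two
   elements.  In Z_m with H = aZ_m the self-inverse cosets are H and, for even
   a, the coset a/2 + H; the latter contains m/2 iff o(a) is odd, and has two
   elements iff o(a) = 2. *)

Section SubgroupSumGraph.
Variables (A : finZmodType) (H : {set A}).
Hypothesis subH : is_subgroup H.

Lemma subgroup0 : 0 \in H. Proof. by case: subH. Qed.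

Lemma subgroupB x y : x \in H -> y \in H -> x - y \in H.
Proof. by case: subH => _; apply. Qed.

Lemma subgroupN x : x \in H -> - x \in H.
Proof. by move=> xH; rewrite -sub0r subgroupB ?subgroup0. Qed.

Lemma subgroupD x y : x \in H -> y \in H -> x + y \in H.
Proof. by move=> xH yH; rewrite -[y]opprK subgroupB ?subgroupN. Qed.

Lemma subgroupNE x : (- x \in H) = (x \in H).
Proof. by apply/idP/idP => /subgroupN; rewrite ?opprK. Qed.

Lemma ssg_adjE x y : ssg_adj H x y = [&& x != y, y != - x & x + y \in H].
Proof.
by rewrite /ssg_adj addr_eq0 -eqr_oppLR [- x == y]eq_sym [_ && (y != _)]andbC.
Qed.

(* Inside a coset X with X = - X, the condition x + y \in H is automatic. *)
Lemma ssg_adj_coset x0 x y : x0 + x0 \in H -> x - x0 \in H -> y - x0 \in H ->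
  ssg_adj H x y = (x != y) && (y != - x).
Proof.
move=> x0H xH yH; rewrite ssg_adjE.
have -> : x + y = (x - x0) + (y - x0) + (x0 + x0).
  by rewrite addrACA !subrK.
by rewrite (subgroupD (subgroupD xH yH) x0H) andbT.
Qed.

Lemma card_coset x0 : #|[set y | y - x0 \in H]| = #|H|.
Proof.
rewrite -(card_imset _ (addIr x0)); apply: eq_card => y; rewrite inE.
apply/idP/imsetP => [yH | [h hH ->]]; last by rewrite addrK.
by exists (y - x0); rewrite ?subrK.
Qed.

Lemma ssg_perfect_code_of_reps (C : {set A}) :
  {in C, forall c, - c \in C} ->
  (forall y, exists2 c, c \in C & c - y \in H) ->
  {in C &, forall c d, c - d \in H -> d = c \/ d = - c} ->
  (forall c y, c \in C -> c + c \in H -> c != - c -> y - c \in H -> y \in C) ->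
  perfect_code (ssg_adj H) C.
Proof.
move=> CN Cmeet Cpair Cfull; split.
  move=> c d cC dC; rewrite ssg_adjE; apply/negP => /and3P [cd dNc cdH].
  have := Cpair _ _ (CN _ cC) dC; rewrite -opprD subgroupNE => /(_ cdH) [] dE.
    by rewrite dE eqxx in dNc.
  by rewrite dE opprK eqxx in cd.
move=> x xC.
have NxC : - x \notin C by apply: contra xC => /CN; rewrite opprK.
have [c cC] := Cmeet (- x); rewrite opprK => cxH.
apply/eqP/cards1P; exists c; apply/setP => d; rewrite !inE ssg_adjE.
apply/idP/eqP => [/andP [dC /and3P [_ _ xdH]] | ->]; last first.
  rewrite cC addrC cxH andbT /=; apply/andP; split.
    by apply: contraTneq cC => <-.
  by apply: contraTneq cC => ->.
have cdH : c - d \in H by rewrite -(addrKA x) subgroupB.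
have [//|dE] := Cpair _ _ cC dC cdH.
have [cNc|cNc] := eqVneq c (- c); first by rewrite dE -cNc.
have ccH : c + c \in H.
  by move: (subgroupB cxH xdH); rewrite dE opprB addrACA subrr addr0.
have := Cfull _ (- x) cC ccH cNc; rewrite -opprD subgroupNE addrC => /(_ cxH).
by rewrite (negPf NxC).
Qed.

(* A self-inverse coset with more than two elements and no element of order at
   most 2 is a complete graph minus a perfect matching: no perfect code can
   meet it. *)
Lemma ssg_no_perfect_code x0 :
  x0 + x0 \in H -> (2 < #|H|)%N -> (forall x, x - x0 \in H -> x != - x) ->
  ~ has_perfect_code (ssg_adj H).
Proof.
move=> x0H H_gt2 noinv [C [indC uniqC]].
set X := [set y | y - x0 \in H].
have XN y : y \in X -> - y \in X.
  rewrite !inE => yX; have -> : - y - x0 = - (y - x0) - (x0 + x0).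
    by rewrite opprB opprD addrACA subrr add0r.
  by rewrite subgroupB ?subgroupN.
have adjX : {in X &, forall x y, ssg_adj H x y = (x != y) && (y != - x)}.
  by move=> x y; rewrite !inE; apply: ssg_adj_coset.
have [c cC cX] : exists2 c, c \in C & c \in X.
  have [x0C|x0C] := boolP (x0 \in C).
    by exists x0; rewrite // inE subrr subgroup0.
  have /eqP/cards1P [c cE] := uniqC _ x0C.
  have := set11 c; rewrite -cE !inE ssg_adjE => /andP [cC /and3P [_ _ x0cH]].
  by exists c; rewrite // inE -(addrKA x0) [c + x0]addrC subgroupB.
have cx0H : c - x0 \in H by rewrite inE in cX.
have cNc : c != - c by apply: noinv.
have NcC : - c \in C.
  apply/negPn/negP => NcC; have /eqP/cards1P [d dE] := uniqC _ NcC.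
  have := set11 d; rewrite -dE !inE ssg_adjE opprK => /andP [dC /and3P [Ncd dc cdH]].
  have dX : d \in X.
    rewrite inE; have -> : d - x0 = (- c + d) + (c - x0).
      by rewrite [- c + d]addrC -addrA addKr.
    by rewrite subgroupD.
  by have := indC _ _ cC dC; rewrite adjX // eq_sym dc eq_sym Ncd.
have [y yX] : exists2 y, y \in X & y \notin [set c; - c].
  apply/subsetPn/negP => /subset_leq_card; rewrite cards2 cNc card_coset.
  by rewrite leqNgt H_gt2.
rewrite !inE negb_or => /andP [yc yNc].
have yC : y \notin C.
  by apply/negP => yC; have := indC _ _ cC yC; rewrite adjX // eq_sym yc yNc.
have cNc_nbrs : [set c; - c] \subset [set z in C | ssg_adj H y z].
  apply/subsetP => z; rewrite !inE => /orP [] /eqP ->.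
    by rewrite cC adjX // yc -eqr_oppLR eq_sym.
  by rewrite NcC adjX ?XN // yNc eqr_opp eq_sym.
by have := subset_leq_card cNc_nbrs; rewrite uniqC // cards2 cNc.
Qed.
End SubgroupSumGraph.

Section CyclicGroup.
Variables (n : nat) (H : {set 'I_n.+1}) (a : nat).
Hypothesis subH : is_subgroup H.
Hypothesis a_gt0 : (0 < a)%N.
Hypothesis aH : (inZp a : 'I_n.+1) \in H.
Hypothesis a_min : forall k, (0 < k)%N -> (k < a)%N -> (inZp k : 'I_n.+1) \notin H.
Local Notation m := n.+1.

Lemma inZpD k l : inZp (k + l) = inZp k + inZp l :> 'I_m.
Proof. by apply: val_inj; rewrite /= modnDm. Qed.

Lemma inZpM k l : inZp (k * l) = inZp k *+ l :> 'I_m.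
Proof. by apply: val_inj; rewrite Zp_mulrn /= modnMml. Qed.

Lemma inZp_dvdn_in k : (a %| k)%N -> (inZp k : 'I_m) \in H.
Proof.
case/dvdnP => q ->; rewrite mulnC inZpM.
by elim: q => [|q IHq]; rewrite ?mulr0n ?(subgroup0 subH) // mulrS (subgroupD subH).
Qed.

Lemma dvdn_inZp_in k : (inZp k : 'I_m) \in H -> (a %| k)%N.
Proof.
move=> kH; have rH : (inZp (k %% a) : 'I_m) \in H.
  have -> : inZp (k %% a) = inZp k - inZp (k %/ a * a) :> 'I_m.
    by rewrite {2}(divn_eq k a) inZpD addrC addKr.
  by rewrite (subgroupB subH kH) // inZp_dvdn_in // dvdn_mull.
apply/eqP; have [//|r_gt0] := posnP (k %% a).
by have := a_min r_gt0 (ltn_pmod k a_gt0); rewrite rH.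
Qed.

Lemma dvdn_a_m : (a %| m)%N.
Proof.
apply: dvdn_inZp_in; have -> : inZp m = 0 :> 'I_m by apply: val_inj; rewrite /= modnn.
exact: subgroup0.
Qed.

Lemma subgroup_memE (z : 'I_m) : (z \in H) = (a %| z)%N.
Proof. by rewrite -{1}(valZpK z); apply/idP/idP => [/dvdn_inZp_in|/inZp_dvdn_in]. Qed.

Lemma subgroup_addE (x y : 'I_m) : (x + y \in H) = (a %| x + y)%N.
Proof. by rewrite subgroup_memE /dvdn /= (modn_dvdm _ dvdn_a_m). Qed.

Lemma subgroup_subE (x y : 'I_m) : (x - y \in H) = (x == y %[mod a])%N.
Proof.
rewrite subgroup_addE /dvdn -modnDmr /= (modn_dvdm _ dvdn_a_m) modnDmr.
rewrite -[0%N](mod0n a) -(eqn_modDl y) addnCA subnKC 1?ltnW // addn0.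
by rewrite -modnDmr (eqP dvdn_a_m) addn0.
Qed.

Lemma a_le_m : (a <= m)%N. Proof. exact: dvdn_leq dvdn_a_m. Qed.

Lemma val_inZp k : (k < m)%N -> val (inZp k : 'I_m) = k.
Proof. exact: modn_small. Qed.

Definition low (x : 'I_m) := ((x : nat).*2 < a)%N.
Definition mid (x : 'I_m) := ((x %% a).*2 == a)%N.

Lemma low_eq x y : low x -> low y -> x - y \in H -> x = y.
Proof.
rewrite /low subgroup_subE => xa ya /eqP.
by rewrite !modn_small; [exact: val_inj | lia | lia].
Qed.

Lemma low_opp_eq0 x y : low x -> low (- y) -> x - y \in H -> x = 0 /\ y = 0.
Proof.
rewrite /low subgroup_addE => xa ya /dvdn_leq le_a.
have sum0 : (x + (- y : 'I_m) = 0)%N.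
  by apply/eqP; rewrite -leqn0 leqNgt; apply/negP => /le_a; lia.
split; first by apply: val_inj => /=; lia.
by apply/eqP; rewrite -oppr_eq0 -val_eqE; apply/eqP; change ((- y : nat) = 0%N); lia.
Qed.

Lemma low_or_opp_eq c d : low c || low (- c) -> low d || low (- d) -> c - d \in H -> d = c.
Proof.
have oppB (x y : 'I_m) : x - y \in H -> - x - - y \in H.
  by rewrite -opprD (subgroupNE subH).
have opp_swap (x y : 'I_m) : x - y \in H -> y - x \in H.
  by rewrite -opprB (subgroupNE subH).
case/orP => cl /orP [] dl cdH.
- exact/esym/low_eq.
- by have [-> ->] := low_opp_eq0 cl dl cdH.
- by have [-> ->] := low_opp_eq0 dl cl (opp_swap _ _ cdH).
- by apply: oppr_inj; apply/esym/low_eq => //; apply: oppB.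
Qed.

Lemma mid_congr x y : x - y \in H -> mid x = mid y.
Proof. by rewrite subgroup_subE /mid => /eqP ->. Qed.

Lemma low_mid x : low x -> ~~ mid x.
Proof. by rewrite /low /mid => x_low; rewrite modn_small; lia. Qed.

Lemma mid_opp x : mid x -> mid (- x).
Proof.
have : (a %| x %% a + (- x : 'I_m) %% a)%N.
  by rewrite /dvdn modnDm -/(dvdn _ _) -subgroup_addE subrr (subgroup0 subH).
case/dvdnP => k; rewrite /mid => sum_ka /eqP r2.
have : ((- x : 'I_m) %% a < a)%N by rewrite ltn_pmod.
by case: k sum_ka => [|[|k]]; nia.
Qed.

Lemma mid_half : ~~ odd a -> mid (inZp a./2).
Proof.
move=> a_even; have a_half : (a./2).*2 = a by rewrite -[RHS]odd_double_half (negPf a_even).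
have a_m := a_le_m.
by rewrite /mid val_inZp ?modn_small ?a_half //; lia.
Qed.

Lemma low_rep y : ~~ mid y -> exists2 c, low c || low (- c) & c - y \in H.
Proof.
rewrite /mid => y_nmid; have r_lt := ltn_pmod y a_gt0; have a_m := a_le_m.
have [r_low|r_high] := ltnP (y %% a).*2 a.
  exists (inZp (y %% a)); first by rewrite /low val_inZp ?r_low //; lia.
  by rewrite subgroup_subE val_inZp ?modn_mod //; lia.
exists (- inZp (a - y %% a)).
  by rewrite /low opprK val_inZp; lia.
rewrite -opprD (subgroupNE subH) subgroup_addE val_inZp; last lia.
by rewrite {2}(divn_eq y a) addnCA subnK 1?ltnW // dvdn_add // dvdn_mull.
Qed.

(* Residues in (-a/2, a/2) give one representative pair {c, -c} for each
   non-self-inverse coset pair and 0 for H; [M] supplies the code on the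
   coset a/2 + H. *)
Definition ssg_code (M : {set 'I_m}) := [set x | low x || low (- x) || (x \in M)].

Lemma perfect_ssg_code (M : {set 'I_m}) :
  {in M, forall c, mid c} -> {in M, forall c, - c \in M} ->
  (~~ odd a -> exists c, c \in M) ->
  {in M &, forall c d, c - d \in H -> d = c \/ d = - c} ->
  {in M, forall c, c != - c -> forall y, mid y -> y \in M} ->
  perfect_code (ssg_adj H) (ssg_code M).
Proof.
move=> M_mid MN M_ne M_pair M_full.
have low_or_opp_notin_M c d : low c || low (- c) -> c - d \in H -> d \notin M.
  move=> /orP [] cl cdH; apply: contraL (low_mid cl) => dM.
    by rewrite (mid_congr cdH) M_mid.
  by rewrite (mid_congr (_ : - c - - d \in H)) ?M_mid ?MN // -opprD (subgroupNE subH).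
apply: (ssg_perfect_code_of_reps subH).
- by move=> c; rewrite !inE opprK => /orP [/orP [] ->|/MN ->]; rewrite ?orbT.
- move=> y; have [y_mid|/low_rep [c cl cyH]] := boolP (mid y); last first.
    by exists c; rewrite // inE cl.
  have [|c cM] := M_ne; first by move: y_mid; rewrite /mid => /eqP <-; rewrite odd_double.
  exists c; first by rewrite inE cM orbT.
  move: y_mid (M_mid _ cM); rewrite subgroup_subE /mid => /eqP ya /eqP ca.
  by apply/eqP/double_inj; rewrite ca ya.
- move=> c d; rewrite !inE => /orP [cl|cM] /orP [dl|dM] cdH.
  + by left; apply: low_or_opp_eq.
  + by have := low_or_opp_notin_M _ _ cl cdH; rewrite dM.
  + have dcH : d - c \in H by rewrite -opprB (subgroupNE subH).
    by have := low_or_opp_notin_M _ _ dl dcH; rewrite cM.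
  + exact: M_pair.
move=> c y; rewrite !inE => /orP [cl|cM] ccH cNc ycH; last first.
  by rewrite (M_full _ cM cNc) ?orbT // (mid_congr ycH) M_mid.
suff c0 : c = 0 by rewrite c0 oppr0 eqxx in cNc.
case/orP: cl => cl.
  by have [] := @low_opp_eq0 c (- c) cl; rewrite ?opprK.
by have [] := @low_opp_eq0 (- c) c cl cl; rewrite -?opprD ?(subgroupNE subH).
Qed.

Lemma opp_fixed (x : 'I_m) : - x = x -> (x : nat) = 0%N \/ (x : nat).*2 = m.
Proof.
move/(congr1 val) => /=; have [->|x_gt0] := posnP x; first by left.
by rewrite modn_small; [right; lia | lia].
Qed.

Lemma order2_mid_pair (c d : 'I_m) :
  (m %/ a = 2)%N -> mid c -> mid d -> d = c \/ d = - c.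
Proof.
move=> o2 c_mid d_mid; have m2a : m = (2 * a)%N by rewrite -o2 divnK // dvdn_a_m.
have mid_val (x : 'I_m) : (x : nat) = (x %% a)%N \/ (x : nat) = (a + x %% a)%N.
  have : (x %/ a < 2)%N by rewrite ltn_divLR // -m2a.
  by move: (divn_eq x a); case: (x %/ a)%N => [|[|q]] xE //; [left | right]; lia.
move: c_mid d_mid; rewrite /mid => /eqP c_r /eqP d_r.
have d_c : (d %% a = c %% a)%N by apply: double_inj; rewrite c_r d_r.
case: (mid_val c) (mid_val d) => c_val [] d_val.
- by left; apply: val_inj; rewrite /= c_val d_val d_c.
- by right; apply: val_inj; rewrite /= modn_small; lia.
- by right; apply: val_inj; rewrite /= modn_small; lia.
- by left; apply: val_inj; rewrite /= c_val d_val d_c.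
Qed.

Lemma ssg_code_mid_perfect :
  odd a || (m %/ a == 2)%N -> perfect_code (ssg_adj H) (ssg_code [set x | mid x]).
Proof.
move=> a_odd_o2; apply: perfect_ssg_code => [c|c|a_even|c d|c _ _ y]; rewrite ?inE //.
- exact: mid_opp.
- by exists (inZp a./2); rewrite inE mid_half.
- move=> c_mid d_mid _; case/orP: a_odd_o2 => [a_odd|/eqP o2].
    by move: c_mid; rewrite /mid => /eqP c_r; rewrite -c_r odd_double in a_odd.
  exact: order2_mid_pair.
Qed.

Lemma ssg_code_half_perfect :
  odd (m %/ a) -> ~~ odd a -> perfect_code (ssg_adj H) (ssg_code [set inZp m./2]).
Proof.
move=> o_odd a_even; set w : 'I_m := inZp m./2.
have m_oa : m = (m %/ a * a)%N by rewrite divnK // dvdn_a_m.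
have o_half := odd_double_half (m %/ a); rewrite o_odd in o_half.
have a_half := odd_double_half a; rewrite (negPf a_even) add0n in a_half.
have m_half := odd_double_half m.
rewrite [in odd m]m_oa oddM (negPf a_even) andbF add0n in m_half.
have w_val : (w : nat) = ((m %/ a)./2 * a + a./2)%N.
  rewrite val_inZp; last lia.
  move: m_oa o_half a_half m_half; move: (m %/ a)%N a./2 (m %/ a)./2 => q b k; nia.
have w2 : (w : nat).*2 = m by rewrite val_inZp; lia.
have w_opp : - w = w.
  by apply: val_inj; change (((m - w) %% m)%N = w); rewrite modn_small; lia.
apply: perfect_ssg_code => [c|c|_|c d|c] //; rewrite ?inE.
- move=> /eqP ->; rewrite /mid w_val modnMDl modn_small; lia.
- by move=> /eqP ->; rewrite w_opp.
- by exists w; rewrite inE.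
- by move=> /eqP -> /eqP ->; left.
- by move=> /eqP ->; rewrite w_opp eqxx.
Qed.

Lemma ssg_no_perfect_code_even :
  ~~ odd a -> ~~ odd (m %/ a) -> (4 <= m %/ a)%N -> ~ has_perfect_code (ssg_adj H).
Proof.
move=> a_even o_even o_ge4.
have a_half := odd_double_half a; rewrite (negPf a_even) add0n in a_half.
have m_oa : m = (m %/ a * a)%N by rewrite divnK // dvdn_a_m.
have o_half := odd_double_half (m %/ a); rewrite (negPf o_even) add0n in o_half.
have a_m := a_le_m.
apply: (ssg_no_perfect_code subH (x0 := inZp a./2)).
- by rewrite subgroup_addE val_inZp ?addnn ?a_half //; lia.
- have sub3 : 0 |: [set inZp a; inZp a.*2] \subset H.
    apply/subsetP => z; rewrite !inE subgroup_memE => /orP [|/orP []] /eqP ->.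
    - by rewrite dvdn0.
    - by rewrite val_inZp ?dvdnn //; nia.
    - by rewrite -muln2 val_inZp ?dvdn_mulr //; nia.
  apply: leq_trans (subset_leq_card sub3); rewrite cardsU1 cards2 !inE.
  by rewrite -!val_eqE /= !modn_small; nia.
- move=> x; rewrite subgroup_subE val_inZp; last lia.
  rewrite (modn_small (_ : a./2 < a)%N); last lia.
  apply: contraL => /eqP /esym /opp_fixed [x0|x2]; first by rewrite x0 mod0n; lia.
  have -> : (x : nat) = ((m %/ a)./2 * a)%N.
    by move: x2 m_oa o_half; move: (m %/ a)%N (m %/ a)./2 => q k; nia.
  by rewrite modnMl; lia.
Qed.

Lemma has_ssg_perfect_codeE :
  has_perfect_code (ssg_adj H) <-> [|| odd a, odd (m %/ a) | m %/ a == 2]%N.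
Proof.
split=> [code | ].
  apply/negPn/negP; rewrite !negb_or => /and3P [a_even o_even o_ne2].
  have o_gt0 : (0 < m %/ a)%N by rewrite divn_gt0 // a_le_m.
  have o_ge4 : (4 <= m %/ a)%N.
    by have := odd_double_half (m %/ a); rewrite (negPf o_even) add0n; lia.
  exact: ssg_no_perfect_code_even a_even o_even o_ge4 code.
case/or3P => [a_odd|o_odd|o2].
- by exists (ssg_code [set x | mid x]); apply: ssg_code_mid_perfect; rewrite a_odd.
- have [a_odd|a_even] := boolP (odd a).
    by exists (ssg_code [set x | mid x]); apply: ssg_code_mid_perfect; rewrite a_odd.
  by exists (ssg_code [set inZp m./2]); apply: ssg_code_half_perfect.
- by exists (ssg_code [set x | mid x]); apply: ssg_code_mid_perfect; rewrite o2 orbT.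
Qed.
End CyclicGroup.

Theorem theorem3p9 (n : nat) (H : {set 'I_n.+1}) (a : nat) :
  is_subgroup H ->
  (0 < a)%N ->
  (inZp a : 'I_n.+1) \in H ->
  (forall k : nat, (0 < k)%N -> (k < a)%N -> (inZp k : 'I_n.+1) \notin H) ->
  let m := n.+1 in
  let oa := (m %/ a)%N in
  has_perfect_code (ssg_adj H) <->
    [\/ odd m,
        ~~ odd m /\ odd oa,
        ~~ odd m /\ oa = 2%N
      | [/\ ~~ odd m, (4 <= oa)%N, ~~ odd oa & odd a]].
Proof.
move=> subH a_gt0 aH a_min m oa.
rewrite (has_ssg_perfect_codeE subH a_gt0 aH a_min) -/m -/oa.
have m_oa : odd m = odd oa && odd a.
  by rewrite /m -(divnK (dvdn_a_m subH a_gt0 aH a_min)) oddM.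
have oa_gt0 : (0 < oa)%N by rewrite divn_gt0 // (a_le_m subH a_gt0 aH a_min).
have [m_odd|m_even] := boolP (odd m).
  by move: (m_odd); rewrite m_oa => /andP [_ a_odd]; rewrite a_odd; split=> // _; apply: Or41.
split; last by case=> [//|[_ ->]|[_ ->]|[_ _ _ ->]]; rewrite ?orbT ?eqxx.
case/or3P => [a_odd|o_odd|/eqP o2]; [|exact: Or42|exact: Or43].
have o_even : ~~ odd oa by move: m_even; rewrite m_oa a_odd andbT.
have [o2|o_ne2] := eqVneq oa 2%N; first exact: Or43.
by apply: Or44; split=> //; have := odd_double_half oa; rewrite (negPf o_even); lia.
Qed.
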